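(* Let $m=n(n+1)/2$ and let $T:\mathcal{S}^n\to\mathbb{R}^m$ be the natural linear isomorphism (recording the entries on and above the diagonal) with $T(\mathcal{N}^n_+)=\mathbb{R}^m_+$. Then $\mathrm{Sem}(\mathcal{N}^n_+)$ is the set of all maps on $\mathcal{S}^n$ of the form $T^{-1}(YX^{-1})T$, where $X$ and $Y$ are entrywise positive $m\times m$ real matrices with $X$ invertible.
   Context: $\mathcal{S}^n$ denotes the space of real symmetric $n\times n$ matrices and $\mathcal{N}^n_+$ the cone of entrywise nonnegative matrices in $\mathcal{S}^n$; $\mathbb{R}^m_+$ is the nonnegative orthant. For a proper cone $K$ in a space $V$ with interior $K^{\circ}$, $\mathrm{Sem}(K)$ is the set of linear maps $L:V\to V$ for which there exists $x\in K^{\circ}$ with $L(x)\in K^{\circ}$. A matrix is entrywise positive if all its entries are strictly positive. *)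

From HB Require Import structures.
From mathcomp Require Import all_boot all_order all_algebra.
From mathcomp Require Import reals.
Set Implicit Arguments. Unset Strict Implicit. Unset Printing Implicit Defensive.
Import Order.TTheory GRing.Theory Num.Theory.
Local Open Scope ring_scope.

Section Defs.
Variable R : realType.
Variable n : nat.

Definition upper_pos : pred ('I_n * 'I_n) := fun p => (p.1 <= p.2)%N.

(* m = number of entries on and above the diagonal ( = n(n+1)/2 ). *)
Definition msize : nat := #|upper_pos|.

Definition is_symm (A : 'M[R]_n) : Prop := A^T = A.

(* The natural isomorphism T : S^n -> R^m, recording the entries on and above
   the diagonal (in the row-major / lexicographic order of enum). *)
Definition Tvec (A : 'M[R]_n) : 'cV[R]_msize :=
  \col_(k < msize) let p := enum_val k in A p.1 p.2.

Definition sortpair (i j : 'I_n) : 'I_n * 'I_n :=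
  if (i <= j)%N then (i, j) else (j, i).

Definition Tinv (v : 'cV[R]_msize) : 'M[R]_n :=
  \matrix_(i, j) \sum_(k < msize) (if enum_val k == sortpair i j then v k 0 else 0).

(* L is a linear map on S^n (represented by a function on n x n matrices,
   whose values off S^n are irrelevant). *)
Definition sym_linear (L : 'M[R]_n -> 'M[R]_n) : Prop :=
  (forall A, is_symm A -> is_symm (L A)) /\
  (forall (a : R) A B, is_symm A -> is_symm B -> L (a *: A + B) = a *: L A + L B).

(* interior of N^n_+ in S^n : symmetric entrywise positive matrices *)
Definition int_Nn (A : 'M[R]_n) : Prop := is_symm A /\ forall i j, 0 < A i j.

Definition Sem_Nn (L : 'M[R]_n -> 'M[R]_n) : Prop :=
  exists x, int_Nn x /\ int_Nn (L x).

End Defs.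

Definition entrywise_pos (R : realType) (p q : nat) (M : 'M[R]_(p, q)) : Prop :=
  forall i j, 0 < M i j.

From HB Require Import structures.
From mathcomp Require Import all_boot all_order all_algebra.
From mathcomp Require Import reals.
From mathcomp Require Import ring lra.
Set Implicit Arguments. Unset Strict Implicit. Unset Printing Implicit Defensive.
Import Order.TTheory GRing.Theory Num.Theory.
Local Open Scope ring_scope.

(* In the coordinates T, L becomes an m x m matrix M and the statement reads:
   some u > 0 has M u > 0 iff M = Y X^-1 with X, Y > 0.  Given such u, the
   rank-one update X = 1 + t u 1^T is positive and invertible for every t > 0
   (Sherman-Morrison), and Y = M X = M + t (M u) 1^T is positive once t is
   large, because M u > 0.  Conversely u = X 1 works, since M u = Y 1. *)

Section SymCoordinates.
Variables (R : realType) (n : nat).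
Local Notation m := (msize n).

Lemma sortpairC (i j : 'I_n) : sortpair i j = sortpair j i.
Proof.
rewrite /sortpair; case: (leqP i j) => [le_ij|lt_ji]; case: leqP => //.
- by move=> le_ji; congr pair; apply/val_inj/eqP; rewrite eqn_leq le_ij le_ji.
- by move=> lt_ij; have := ltn_trans lt_ij lt_ji; rewrite ltnn.
Qed.

Lemma sortpair_upper (i j : 'I_n) : sortpair i j \in @upper_pos n.
Proof.
rewrite /sortpair; case: leqP => [le_ij|/ltnW le_ji]; by rewrite unfold_in.
Qed.

Lemma sortpair_enum (i j : 'I_n) : exists k : 'I_m, enum_val k = sortpair i j.
Proof.
exists (enum_rank_in (sortpair_upper i j) (sortpair i j)).
by rewrite enum_rankK_in ?sortpair_upper.
Qed.

Lemma Tinv_entry (v : 'cV[R]_m) {i j : 'I_n} {k : 'I_m} :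
  enum_val k = sortpair i j -> Tinv v i j = v k 0.
Proof.
move=> ek; rewrite mxE (bigD1 k) //= ek eqxx big1 ?addr0 // => k' k'k.
by case: eqP => // ek'; case/eqP: k'k; apply: enum_val_inj; rewrite ek' ek.
Qed.

Lemma Tinv_symm (v : 'cV[R]_m) : is_symm (Tinv v).
Proof.
by apply/matrixP => i j; rewrite !mxE; apply: eq_bigr => k _; rewrite sortpairC.
Qed.

Lemma TvecK : cancel (@Tinv R n) (@Tvec R n).
Proof.
move=> v; apply/matrixP => k z; rewrite (ord1 z) mxE; apply: Tinv_entry.
have := enum_valP k; rewrite unfold_in /upper_pos /sortpair => ->.
by case: (enum_val k).
Qed.

Lemma TinvK (A : 'M[R]_n) : is_symm A -> Tinv (Tvec A) = A.
Proof.
move=> symA; apply/matrixP => i j; have [k ek] := sortpair_enum i j.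
rewrite (Tinv_entry _ ek) mxE ek /sortpair; case: leqP => // _ /=.
by rewrite -[in LHS]symA mxE.
Qed.

Lemma Tinv_linear : linear (@Tinv R n).
Proof.
move=> a v w; apply/matrixP => i j; have [k ek] := sortpair_enum i j.
by rewrite [in RHS]mxE [in RHS]mxE !(Tinv_entry _ ek) !mxE.
Qed.

Lemma Tvec_linear : linear (@Tvec R n).
Proof. by move=> a A B; apply/matrixP => k z; rewrite !mxE /= !mxE. Qed.

Lemma int_Nn_Tinv (v : 'cV[R]_m) : entrywise_pos v -> int_Nn (Tinv v).
Proof.
move=> v_gt0; split=> [|i j]; first exact: Tinv_symm.
by have [k ek] := sortpair_enum i j; rewrite (Tinv_entry _ ek).
Qed.

Lemma Tvec_gt0 (A : 'M[R]_n) : int_Nn A -> entrywise_pos (Tvec A).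
Proof. by move=> [_ A_gt0] k z; rewrite mxE. Qed.

End SymCoordinates.

Lemma linear_cV_mulmx (R : comPzRingType) (p q : nat) (f : 'cV[R]_p -> 'cV[R]_q) :
  linear f -> exists M : 'M[R]_(q, p), forall v, f v = M *m v.
Proof.
move=> /GRing.semilinear_linear [fZ fD].
have f0 : f 0 = 0 by rewrite -(scale0r (0 : 'cV[R]_p)) fZ /= scale0r.
exists (\matrix_(i, j) f (delta_mx j 0) i 0) => v.
have ev : v = \sum_j v j 0 *: delta_mx j 0.
  by rewrite {1}[v]matrix_sum_delta; apply: eq_bigr => j _; rewrite big_ord1.
rewrite {1}ev (big_morph f fD f0); apply/matrixP => i z; rewrite (ord1 z) !mxE summxE.
by apply: eq_bigr => j _; rewrite fZ !mxE mulrC.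
Qed.

Lemma sym_linear_mx (R : realType) (n : nat) (L : 'M[R]_n -> 'M[R]_n) :
  sym_linear L ->
  exists M : 'M[R]_(msize n), forall A, is_symm A -> L A = Tinv (M *m Tvec A).
Proof.
move=> [Lsymm Llin].
have [M LM] : exists M, forall v, Tvec (L (Tinv v)) = M *m v.
  apply: linear_cV_mulmx => a v w.
  by rewrite Tinv_linear /= Llin ?Tvec_linear //; apply: Tinv_symm.
by exists M => A symA; rewrite -LM (TinvK symA) TinvK //; apply: Lsymm.
Qed.

Lemma unitmx_rank1_update (F : fieldType) (p : nat) (u : 'cV[F]_p) (w : 'rV[F]_p)
    (t : F) :
  1 + t * (w *m u) 0 0 != 0 -> 1%:M + t *: (u *m w) \in unitmx.
Proof.
set s := (w *m u) 0 0; set P := u *m w => ts_neq0.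
have PP : P *m P = s *: P.
  by rewrite /P mulmxA -(mulmxA u w u) [w *m u]mx11_scalar mul_mx_scalar scalemxAl.
set c := t / (1 + t * s).
have c_def : c * (1 + t * s) = t by rewrite divfK.
suff : (1%:M + t *: P) *m (1%:M - c *: P) = 1%:M by case/mulmx1_unit.
rewrite mulmxDl mulmxBr !mul1mx mulmxBr mulmx1 -!scalemxAl -scalemxAr PP !scalerA.
rewrite -scalerBl -addrA -scaleNr -scalerDl.
have -> : - c + (t - t * c * s) = 0 by rewrite -{1}c_def; ring.
by rewrite scale0r addr0.
Qed.

Section PositiveFactorization.
Variables (R : realType) (p : nat).
Local Notation ones := (const_mx 1 : 'rV[R]_p).

Definition semipositive (M : 'M[R]_p) : Prop :=
  exists2 u : 'cV[R]_p, entrywise_pos u & entrywise_pos (M *m u).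

Lemma mulmx_gt0 (A : 'M[R]_p) (v : 'cV[R]_p) :
  entrywise_pos A -> entrywise_pos v -> entrywise_pos (A *m v).
Proof.
move=> A_gt0 v_gt0 i z; rewrite mxE (bigD1 i) //=.
have Aiv_gt0 := mulr_gt0 (A_gt0 i i) (v_gt0 i z).
have : 0 <= \sum_(j | j != i) A i j * v j z.
  by apply: sumr_ge0 => j _; rewrite mulr_ge0 // ltW.
lra.
Qed.

Lemma rank1_update_entry (q : nat) (B : 'M[R]_(q, p)) (t : R) (a : 'cV[R]_q) i j :
  (B + t *: (a *m ones)) i j = B i j + t * a i 0.
Proof. by rewrite !mxE big_ord1 !mxE mulr1. Qed.

Lemma rank1_update_gt0 (q : nat) (B : 'M[R]_(q, p)) (t : R) (a : 'cV[R]_q) :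
  (forall i j, 0 <= B i j) -> 0 < t -> entrywise_pos a ->
  entrywise_pos (B + t *: (a *m ones)).
Proof.
move=> B_ge0 t_gt0 a_gt0 i j; rewrite rank1_update_entry.
by rewrite ltr_wpDl // mulr_gt0.
Qed.

Lemma exists_rank1_update_gt0 (q : nat) (B : 'M[R]_(q, p)) (a : 'cV[R]_q) :
  entrywise_pos a -> exists2 t, 0 < t & entrywise_pos (B + t *: (a *m ones)).
Proof.
move=> a_gt0; set t := 1 + \sum_(k : 'I_q * 'I_p) `|B k.1 k.2| / a k.1 0.
have term_ge0 (k : 'I_q * 'I_p) : 0 <= `|B k.1 k.2| / a k.1 0.
  by rewrite divr_ge0 // ltW.
have t_ge i j : 1 + `|B i j| / a i 0 <= t.
  by rewrite lerD2l (bigD1 (i, j)) //= lerDl sumr_ge0.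
exists t; first by rewrite ltr_pwDl // sumr_ge0.
move=> i j; rewrite rank1_update_entry.
have ai_gt0 := a_gt0 i 0.
have ta_ge : `|B i j| + a i 0 <= t * a i 0.
  apply: le_trans (ler_wpM2r (ltW ai_gt0) (t_ge i j)).
  by rewrite mulrDl mul1r divfK ?gt_eqF // addrC.
have := ler_norm (- B i j); rewrite normrN.
lra.
Qed.

Lemma semipositiveP (M : 'M[R]_p) :
  semipositive M <->
  exists X Y : 'M[R]_p,
    [/\ X \in unitmx, entrywise_pos X, entrywise_pos Y & M = Y *m invmx X].
Proof.
have ones_gt0 : entrywise_pos (ones^T) by move=> i j; rewrite !mxE.
split.
- case=> u u_gt0 Mu_gt0; have [t t_gt0 Y_gt0] := exists_rank1_update_gt0 M Mu_gt0.
  set X := 1%:M + t *: (u *m ones).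
  have uX : X \in unitmx.
    apply: unitmx_rank1_update.
    rewrite gt_eqF // ltr_pwDl // mulr_ge0 ?(ltW t_gt0) //.
    by rewrite mxE sumr_ge0 // => j _; rewrite mxE mul1r ltW.
  exists X, (M *m X); split=> //; last by rewrite mulmxK.
  + by apply: rank1_update_gt0 => // i j; rewrite mxE ler0n.
  + by rewrite mulmxDr mulmx1 -scalemxAr mulmxA.
- case=> X [Y [uX X_gt0 Y_gt0 ->]]; exists (X *m ones^T); first exact: mulmx_gt0.
  by rewrite -mulmxA mulKmx //; apply: mulmx_gt0.
Qed.

End PositiveFactorization.

Lemma Sem_Nn_semipositive (R : realType) (n : nat) (L : 'M[R]_n -> 'M[R]_n)
    (M : 'M[R]_(msize n)) :
  (forall A, is_symm A -> L A = Tinv (M *m Tvec A)) -> Sem_Nn L <-> semipositive M.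
Proof.
move=> LM; split.
- case=> x [x_int Lx_int]; exists (Tvec x); first exact: Tvec_gt0.
  by have := Tvec_gt0 Lx_int; rewrite LM ?TvecK //; case: x_int.
- case=> u u_gt0 Mu_gt0; exists (Tinv u); split; first exact: int_Nn_Tinv.
  by rewrite LM ?TvecK; [apply: int_Nn_Tinv | apply: Tinv_symm].
Qed.

Theorem mainTheorem8 (R : realType) (n : nat) (L : 'M[R]_n -> 'M[R]_n) :
  sym_linear L ->
  (Sem_Nn L <->
   exists X Y : 'M[R]_(msize n),
     [/\ X \in unitmx, entrywise_pos X, entrywise_pos Y &
         forall A : 'M[R]_n, is_symm A -> L A = Tinv (Y *m invmx X *m Tvec A)]).
Proof.
move=> /sym_linear_mx [M LM]; split.
- rewrite (Sem_Nn_semipositive LM) => /semipositiveP[X [Y [uX X_gt0 Y_gt0 defM]]].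
  by exists X, Y; split=> // A /LM; rewrite defM.
- case=> X [Y [uX X_gt0 Y_gt0 LXY]]; rewrite (Sem_Nn_semipositive LXY).
  by apply/semipositiveP; exists X, Y.
Qed.
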